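(* For every integer $r\ge 1$, $$\sum_{n=1}^{\infty}\frac{n4^n}{(2n-1)^2(2n+1)(4n+2r+1)}\frac{\binom{2n}{n}}{\binom{4n+2r}{2n+r}}=\frac{\sqrt{2}}{2}\sum_{k=0}^{r+1}\frac{(-1)^k}{(2k+1)2^{2r-k+1}}\binom{r+1}{k}\mathcal{B}(k)+\frac{\varphi(2r+1)}{2^{2r+3}}-\frac{1}{2^{3/2}}\sum_{k=0}^{r-1}\frac{(-1)^k}{(2k+1)2^{2r-k+1}}\binom{r-1}{k}\mathcal{B}(k),$$ where $\mathcal{B}(k)=\int_0^{1/2}\frac{t^k}{\sqrt{1-t}}\,\mathrm{d}t$ and $\varphi(2k+1)=\int_0^1 t^{2k+1}\sqrt{1+t^2}\,\mathrm{d}t$. *)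

From Stdlib Require Import Reals.
From Coquelicot Require Import Coquelicot.
Open Scope R_scope.

Definition calB (k : nat) : R := RInt (fun t => t ^ k / sqrt (1 - t)) 0 (1/2).

Definition varphi (m : nat) : R := RInt (fun t => t ^ m * sqrt (1 + t ^ 2)) 0 1.

Definition lhs_term (r n : nat) : R :=
  (INR n * 4 ^ n) /
  ((2 * INR n - 1) ^ 2 * (2 * INR n + 1) * (4 * INR n + 2 * INR r + 1)) *
  (Binomial.C (2 * n) n / Binomial.C (4 * n + 2 * r) (2 * n + r)).

(* Writing C(2n,n) / C(4n+2r,2n+r) with the Wallis integral
   int_0^1 (1 - s^2)^m ds = 4^m / ((2m+1) C(2m,m)) turns the series into
   4^-r int_0^1 (1 - s^2)^r Phi(1 - s^2) ds, where Phi(w) = sum_n n C(2n,n) 4^-n w^(2n) / ((2n-1)^2 (2n+1)).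
   Partial fractions split Phi into three series obtained from the binomial series of
   1 / sqrt (1 - y) by integration, so that
   Phi(w) = sqrt (1 - w^2) / 8 + w asin w / 4 - asin w / (8 w).
   With asin (1 - s^2) = pi/2 - 2 asin (s / sqrt 2), the square-root part of the integrand gives phi(2r+1)
   after substitution, and an integration by parts against the antiderivatives of (1 - s^2)^m
   reduces the arcsine part to the integrals B(k) by the substitution t = s^2 / 2.
   All limits are controlled by explicit bounds: the partial sums of the binomial series nearly
   solve (1 - y) f' = f / 2, and the tail of Phi after K terms is at most 1 / (K + 1) uniformly,
   which justifies exchanging sum and integral. *)

From Stdlib Require Import Reals Lra Lia Factorial.
From Coquelicot Require Import Coquelicot.
Open Scope R_scope.

Lemma is_RInt_plus_R (f g : R -> R) a b If Ig :
  is_RInt f a b If -> is_RInt g a b Ig -> is_RInt (fun x => f x + g x) a b (If + Ig).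
Proof. exact (is_RInt_plus f g a b If Ig). Qed.

Lemma is_RInt_minus_R (f g : R -> R) a b If Ig :
  is_RInt f a b If -> is_RInt g a b Ig -> is_RInt (fun x => f x - g x) a b (If - Ig).
Proof. exact (is_RInt_minus f g a b If Ig). Qed.

Lemma is_RInt_scal_R (f : R -> R) a b k If :
  is_RInt f a b If -> is_RInt (fun x => k * f x) a b (k * If).
Proof. exact (is_RInt_scal f a b k If). Qed.

Lemma is_RInt_const_R a b c : is_RInt (fun _ => c) a b ((b - a) * c).
Proof. exact (is_RInt_const a b c). Qed.

Lemma is_RInt_ext_R (f g : R -> R) a b l :
  (forall x, Rmin a b < x < Rmax a b -> f x = g x) -> is_RInt f a b l -> is_RInt g a b l.
Proof. exact (is_RInt_ext f g a b l). Qed.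

Lemma is_RInt_unique_R (f : R -> R) a b l : is_RInt f a b l -> RInt f a b = l.
Proof. exact (is_RInt_unique f a b l). Qed.

Lemma is_RInt_derive_R (F f : R -> R) a b :
  (forall x, Rmin a b <= x <= Rmax a b -> is_derive F x (f x)) ->
  (forall x, Rmin a b <= x <= Rmax a b -> continuous f x) ->
  is_RInt f a b (F b - F a).
Proof. exact (is_RInt_derive F f a b). Qed.

Lemma is_RInt_comp_R (f g dg : R -> R) a b :
  (forall x, Rmin a b <= x <= Rmax a b -> continuous f (g x)) ->
  (forall x, Rmin a b <= x <= Rmax a b -> is_derive g x (dg x) /\ continuous dg x) ->
  is_RInt (fun x => dg x * f (g x)) a b (RInt f (g a) (g b)).
Proof. exact (is_RInt_comp f g dg a b). Qed.

Lemma continuous_of_ex_derive (f : R -> R) x : ex_derive f x -> continuous f x.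
Proof. exact (ex_derive_continuous f x). Qed.

Lemma ex_RInt_continuous_R (f : R -> R) a b :
  (forall x, Rmin a b <= x <= Rmax a b -> continuous f x) -> ex_RInt f a b.
Proof. exact (ex_RInt_continuous f a b). Qed.

Lemma is_RInt_sum_f_R0 (F : nat -> R -> R) (I : nat -> R) N a b :
  (forall n, (n <= N)%nat -> is_RInt (F n) a b (I n)) ->
  is_RInt (fun x => sum_f_R0 (fun n => F n x) N) a b (sum_f_R0 I N).
Proof.
  induction N as [|N IH]; intros HF; simpl.
  - apply HF; lia.
  - apply is_RInt_plus_R; auto.
Qed.

Lemma is_derive_sum_f_R0 (F : nat -> R -> R) (dF : nat -> R) N x :
  (forall n, (n <= N)%nat -> is_derive (F n) x (dF n)) ->
  is_derive (fun y => sum_f_R0 (fun n => F n y) N) x (sum_f_R0 dF N).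
Proof.
  induction N as [|N IH]; intros HF; simpl.
  - apply HF; lia.
  - apply (is_derive_plus (fun y => sum_f_R0 (fun n => F n y) N) (F (S N))); auto.
Qed.

Lemma is_derive_plus_R (f g : R -> R) x df dg :
  is_derive f x df -> is_derive g x dg -> is_derive (fun t => f t + g t) x (df + dg).
Proof. exact (is_derive_plus f g x df dg). Qed.

Lemma is_derive_minus_R (f g : R -> R) x df dg :
  is_derive f x df -> is_derive g x dg -> is_derive (fun t => f t - g t) x (df - dg).
Proof. exact (is_derive_minus f g x df dg). Qed.

Lemma is_derive_mult_R (f g : R -> R) x df dg :
  is_derive f x df -> is_derive g x dg -> is_derive (fun t => f t * g t) x (df * g x + f x * dg).
Proof. intros Hf Hg. exact (is_derive_mult f g x df dg Hf Hg Rmult_comm). Qed.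

Lemma is_derive_monomial c k x : is_derive (fun y => c * y ^ k) x (c * (INR k * x ^ pred k)).
Proof. apply is_derive_scal, is_derive_Reals, derivable_pt_lim_pow. Qed.

Lemma is_derive_poly (c : nat -> R) (e : nat -> nat) (f : R -> R) (d : nat -> R) K x :
  (forall y, f y = sum_f_R0 (fun n => c n * y ^ e n) K) ->
  (forall n, (n <= K)%nat -> c n * (INR (e n) * x ^ pred (e n)) = d n) ->
  is_derive f x (sum_f_R0 d K).
Proof.
  intros Hf Hd. apply (is_derive_ext (fun y => sum_f_R0 (fun n => c n * y ^ e n) K)); [auto |].
  rewrite <- (sum_eq _ _ _ Hd).
  apply (is_derive_sum_f_R0 (fun n y => c n * y ^ e n)). intros; apply is_derive_monomial.
Qed.

Lemma derive_le_mono (F G f g : R -> R) a b : a <= b ->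
  (forall x, a <= x <= b -> is_derive F x (f x)) ->
  (forall x, a <= x <= b -> is_derive G x (g x)) ->
  (forall x, a <= x <= b -> f x <= g x) -> F b - F a <= G b - G a.
Proof.
  intros Hab HF HG Hfg. destruct (Req_dec a b) as [<- | Hne]; [lra |].
  destruct (MVT_cor3 (fun x => G x - F x) (fun x => g x - f x) a b) as (c & Hac & Hcb & E).
  - lra.
  - intros x Hax Hxb. apply is_derive_Reals, (is_derive_minus G F); auto.
  - assert (f c <= g c) by (apply Hfg; lra). nra.
Qed.

Lemma derive_bounds_from_0 (E e : R -> R) x B : 0 <= x <= 1 -> E 0 = 0 ->
  (forall t, 0 <= t <= x -> is_derive E t (e t)) ->
  (forall t, 0 <= t <= x -> 0 <= e t <= B) -> 0 <= E x <= B.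
Proof.
  intros Hx E0 HE He.
  assert (HB : 0 <= B) by (specialize (He 0); lra).
  pose proof (derive_le_mono (fun _ => 0) E (fun _ => 0) e 0 x ltac:(lra)) as Lo.
  pose proof (derive_le_mono E (fun t => B * t) e (fun _ => B) 0 x ltac:(lra) HE) as Hi.
  split.
  - enough (0 - 0 <= E x - E 0) by lra.
    apply Lo; auto. intros; auto_derive; auto. intros t Ht; apply He; auto.
  - enough (E x - E 0 <= B * x - B * 0) by nra.
    apply Hi. 2: intros t Ht; apply He; auto.
    intros t _. auto_derive; auto; ring.
Qed.

Lemma pow_le_1 x n : 0 <= x <= 1 -> x ^ n <= 1.
Proof. intros Hx. rewrite <- (pow1 n). now apply pow_incr. Qed.

(** * The binomial series of 1 / sqrt (1 - y) *)

Definition central (n : nat) : R := Binomial.C (2 * n) n / 4 ^ n.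

Lemma C_central m : Binomial.C (2 * m) m = INR (fact (2 * m)) / (INR (fact m) * INR (fact m)).
Proof. unfold Binomial.C. now replace (2 * m - m)%nat with m by lia. Qed.

Lemma C_central_pos m : 0 < Binomial.C (2 * m) m.
Proof.
  rewrite C_central.
  pose proof (lt_INR_0 _ (lt_O_fact (2 * m))). pose proof (lt_INR_0 _ (lt_O_fact m)).
  apply Rdiv_lt_0_compat; auto. now apply Rmult_lt_0_compat.
Qed.

Lemma C_central_S m : Binomial.C (2 * S m) (S m) =
  Binomial.C (2 * m) m * (2 * INR m + 1) * (2 * INR m + 2) / ((INR m + 1) * (INR m + 1)).
Proof.
  rewrite !C_central. replace (2 * S m)%nat with (S (S (2 * m))) by lia.
  rewrite !fact_simpl, !mult_INR, !S_INR, mult_INR. simpl (INR 2).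
  pose proof (INR_fact_neq_0 m). pose proof (INR_fact_neq_0 (2 * m)). pose proof (pos_INR m).
  field. repeat split; auto; lra.
Qed.

Lemma central_0 : central 0 = 1.
Proof. unfold central, Binomial.C. simpl. field. Qed.

Lemma central_S n : central (S n) = central n * (2 * INR n + 1) / (2 * INR n + 2).
Proof.
  unfold central. rewrite C_central_S. simpl (4 ^ S n). pose proof (pos_INR n).
  assert (4 ^ n <> 0) by (apply pow_nonzero; lra).
  field. repeat split; auto; lra.
Qed.

Lemma central_bounds n : 0 < central n <= 1.
Proof.
  induction n as [|n IH]; [rewrite central_0; lra |].
  rewrite central_S. pose proof (pos_INR n).
  split; [apply Rdiv_lt_0_compat; nra |].
  apply Rmult_le_reg_r with (2 * INR n + 2); [lra |].
  unfold Rdiv. rewrite Rmult_assoc, Rinv_l, Rmult_1_r by lra. nra.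
Qed.

Definition binom_partial M y := sum_f_R0 (fun n => central n * y ^ n) M.
Definition binom_partial' M y := sum_f_R0 (fun n => central n * (INR n * y ^ pred n)) M.

Lemma binom_partial_derive M y : is_derive (binom_partial M) y (binom_partial' M y).
Proof. apply (is_derive_sum_f_R0 (fun n y => central n * y ^ n)). intros; apply is_derive_monomial. Qed.

Lemma binom_partial_0 M : binom_partial M 0 = 1.
Proof.
  unfold binom_partial. induction M as [|M IH]; simpl; [rewrite central_0; ring |].
  rewrite IH. ring.
Qed.

(* The partial sums almost solve [(1 - y) f' = f / 2], whose solution is [1 / sqrt (1 - y)]. *)
Lemma binom_partial_ode M y :
  (1 - y) * binom_partial' M y - binom_partial M y / 2 = - ((INR M + / 2) * central M) * y ^ M.
Proof.
  unfold binom_partial, binom_partial'.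
  induction M as [|M IH]; [simpl; rewrite central_0; field |].
  rewrite !tech5.
  set (D := sum_f_R0 (fun n => central n * (INR n * y ^ pred n)) M) in *.
  set (P := sum_f_R0 (fun n => central n * y ^ n) M) in *.
  assert (E : (1 - y) * D = P / 2 - (INR M + / 2) * central M * y ^ M) by lra.
  rewrite Rmult_plus_distr_l, E, central_S, S_INR. simpl pred. simpl pow.
  pose proof (pos_INR M). field. lra.
Qed.

Lemma binom_partial_sqrt_derive M t : t < 1 ->
  is_derive (fun t => binom_partial M t * sqrt (1 - t)) t
    (- ((INR M + / 2) * central M) * t ^ M / sqrt (1 - t)).
Proof.
  intros Ht. set (s := sqrt (1 - t)).
  assert (Hs : 0 < s) by (apply sqrt_lt_R0; lra).
  assert (Hss : s * s = 1 - t) by (apply sqrt_sqrt; lra).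
  replace (- ((INR M + / 2) * central M) * t ^ M / s)
    with (binom_partial' M t * s + binom_partial M t * (- 1 / (2 * s))).
  - apply is_derive_mult_R; [apply binom_partial_derive |].
    apply (is_derive_sqrt (fun t => 1 - t)); [auto_derive; auto; ring | lra].
  - rewrite <- binom_partial_ode, <- Hss. field. lra.
Qed.

Lemma binom_partial_sqrt_le M y : 0 <= y < 1 ->
  0 <= 1 - binom_partial M y * sqrt (1 - y) <= y ^ S M / sqrt (1 - y).
Proof.
  intros Hy.
  set (u := fun t => binom_partial M t * sqrt (1 - t)).
  set (c := (INR M + / 2) * central M).
  set (s := sqrt (1 - y)).
  assert (Hs : 0 < s) by (apply sqrt_lt_R0; lra).
  assert (Hc : 0 <= c <= INR M + 1) by (pose proof (central_bounds M); pose proof (pos_INR M); unfold c; nra).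
  assert (Hu : forall t, 0 <= t <= y -> is_derive u t (- c * t ^ M / sqrt (1 - t)))
    by (intros t Ht; apply binom_partial_sqrt_derive; lra).
  assert (Hu0 : u 0 = 1) by (unfold u; rewrite binom_partial_0, Rminus_0_r, sqrt_1; ring).
  (* [u] decreases from [u 0 = 1], but no faster than [- c t ^ M / s]. *)
  assert (Hdec : u y - u 0 <= 0 - 0).
  { apply (derive_le_mono u (fun _ => 0) (fun t => - c * t ^ M / sqrt (1 - t)) (fun _ => 0) 0 y);
      [lra | exact Hu | intros; auto_derive; auto |].
    intros t Ht. assert (0 < sqrt (1 - t)) by (apply sqrt_lt_R0; lra).
    assert (0 <= t ^ M) by (apply pow_le; lra).
    unfold Rdiv. apply Rmult_le_0_r; [nra | left; apply Rinv_0_lt_compat; lra]. }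
  assert (Hslow : - c / s * y ^ S M / INR (S M) - 0 <= u y - u 0).
  { replace 0 with (- c / s * 0 ^ S M / INR (S M)) at 1 by (rewrite pow_i by lia; unfold Rdiv; ring).
    apply (derive_le_mono (fun t => - c / s * t ^ S M / INR (S M)) u (fun t => - c / s * t ^ M)
      (fun t => - c * t ^ M / sqrt (1 - t))); [lra | | exact Hu |].
    - intros t _. auto_derive; auto.
      change (match M with 0%nat => 1 | S _ => INR M + 1 end) with (INR (S M)).
      field; repeat split; (lra || (apply not_0_INR; lia)).
    - intros t Ht. assert (0 < sqrt (1 - t)) by (apply sqrt_lt_R0; lra).
      assert (s <= sqrt (1 - t)) by (apply sqrt_le_1; lra).
      assert (0 <= c * t ^ M) by (apply Rmult_le_pos; [lra | apply pow_le; lra]).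
      unfold Rdiv. rewrite !Ropp_mult_distr_l_reverse, !(Rmult_comm _ (t ^ M)), <- !Rmult_assoc.
      apply Ropp_le_contravar, Rmult_le_compat_l; [nra | apply Rinv_le_contravar; lra]. }
  assert (Hfrac : c / INR (S M) <= 1) by (rewrite S_INR; apply Rle_div_l; pose proof (pos_INR M); lra).
  assert (0 <= y ^ S M / s) by (apply Rdiv_le_0_compat; [apply pow_le |]; lra).
  replace (- c / s * y ^ S M / INR (S M)) with (- (c / INR (S M) * (y ^ S M / s))) in Hslow
    by (field; split; [lra | apply not_0_INR; lia]).
  rewrite Hu0 in Hdec, Hslow. change (u y) with (binom_partial M y * s) in Hdec, Hslow. split; nra.
Qed.

Lemma binom_partial_error M y : 0 <= y < 1 ->
  0 <= 1 / sqrt (1 - y) - binom_partial M y <= y ^ S M / (1 - y).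
Proof.
  intros Hy. pose proof (binom_partial_sqrt_le M y Hy) as Hb.
  assert (Hs : 0 < sqrt (1 - y)) by (apply sqrt_lt_R0; lra).
  replace (1 / sqrt (1 - y) - binom_partial M y) with ((1 - binom_partial M y * sqrt (1 - y)) / sqrt (1 - y))
    by (field; lra).
  replace (y ^ S M / (1 - y)) with (y ^ S M / sqrt (1 - y) / sqrt (1 - y))
    by (unfold Rdiv; rewrite Rmult_assoc, <- Rinv_mult, sqrt_sqrt; lra).
  split; [apply Rdiv_le_0_compat | apply Rmult_le_compat_r; [left; apply Rinv_0_lt_compat |]]; lra.
Qed.

(** * Series for asin x, sqrt (1 - x^2) and x asin x + sqrt (1 - x^2) *)

Definition geom_tail K x := (x ^ 2) ^ S K / (1 - x ^ 2).

Lemma geom_tail_le K t x : 0 <= t <= x -> x < 1 -> 0 <= geom_tail K t <= geom_tail K x.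
Proof.
  intros Ht Hx. unfold geom_tail.
  assert (0 <= t ^ 2 <= x ^ 2) by (split; nra).
  split; [apply Rdiv_le_0_compat; [apply pow_le |]; nra |].
  unfold Rdiv. apply Rmult_le_compat; [apply pow_le; lra | left; apply Rinv_0_lt_compat; nra | |].
  - apply pow_incr; lra.
  - apply Rinv_le_contravar; nra.
Qed.

Lemma geom_tail_S K x : 0 <= x <= 1 -> geom_tail (S K) x <= geom_tail K x.
Proof.
  intros Hx. unfold geom_tail. destruct (Req_dec x 1) as [-> | Hne].
  - replace (1 - 1 ^ 2) with 0 by ring. unfold Rdiv. rewrite Rinv_0. lra.
  - assert (x ^ 2 < 1) by nra. assert (0 <= (x ^ 2) ^ S K) by (apply pow_le; nra).
    unfold Rdiv. apply Rmult_le_compat_r; [left; apply Rinv_0_lt_compat; lra |].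
    change ((x ^ 2) ^ S (S K)) with (x ^ 2 * (x ^ 2) ^ S K). nra.
Qed.

Lemma is_lim_seq_geom_tail x : 0 <= x < 1 -> is_lim_seq (fun K => geom_tail K x) 0.
Proof.
  intros Hx.
  assert (Hq : is_lim_seq (fun K => (x ^ 2) ^ K) 0)
    by (apply is_lim_seq_geom; rewrite Rabs_right by (apply Rle_ge, pow_le; nra); nra).
  pose proof (is_lim_seq_scal_l _ (x ^ 2 / (1 - x ^ 2)) 0 Hq) as H.
  simpl in H. rewrite Rmult_0_r in H. eapply is_lim_seq_ext; [| exact H].
  intros K. unfold geom_tail. simpl pow at 2. field. nra.
Qed.

Lemma binom_partial_sq_error K t x : 0 <= t <= x -> x < 1 ->
  0 <= 1 / sqrt (1 - t ^ 2) - binom_partial K (t ^ 2) <= geom_tail K x.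
Proof.
  intros Ht Hx. pose proof (geom_tail_le K t x Ht Hx).
  pose proof (binom_partial_error K (t ^ 2) ltac:(split; nra)). unfold geom_tail in *. lra.
Qed.

Lemma odd_INR_neq_0 n : 2 * INR n - 1 <> 0.
Proof. destruct n; [simpl; lra |]. rewrite S_INR. pose proof (pos_INR n). lra. Qed.

Lemma is_derive_asin t : -1 < t < 1 -> is_derive asin t (1 / sqrt (1 - t ^ 2)).
Proof.
  intros Ht. apply is_derive_Reals.
  apply (derive_pt_eq_1 asin t _ (derivable_pt_asin t Ht)).
  rewrite derive_pt_asin. unfold Rsqr. repeat f_equal. ring.
Qed.

Lemma is_derive_sqrt_1_sub_sq t : -1 < t < 1 ->
  is_derive (fun t => sqrt (1 - t ^ 2)) t (- t / sqrt (1 - t ^ 2)).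
Proof.
  intros Ht. assert (0 < 1 - t ^ 2) by nra.
  assert (0 < sqrt (1 - t ^ 2)) by (apply sqrt_lt_R0; lra).
  auto_derive; [simpl; nra |].
  replace (1 + - (t * (t * 1))) with (1 - t ^ 2) by ring. field. lra.
Qed.

Definition asin_partial K x := sum_f_R0 (fun n => central n * x ^ (2 * n + 1) / (2 * INR n + 1)) K.
Definition sqrt_partial K x := sum_f_R0 (fun n => central n * / (2 * INR n - 1) * x ^ (2 * n)) K.
Definition asin_int_partial K x :=
  sum_f_R0 (fun n => central n * / (2 * INR n - 1) ^ 2 * x ^ (2 * n)) K.

Lemma asin_partial_derive K x : is_derive (asin_partial K) x (binom_partial K (x ^ 2)).
Proof.
  apply (is_derive_poly (fun n => central n / (2 * INR n + 1)) (fun n => 2 * n + 1)%nat).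
  - intros y. apply sum_eq. intros n _. unfold Rdiv. ring.
  - intros n _. replace (pred (2 * n + 1)) with (2 * n)%nat by lia.
    rewrite <- pow_mult, plus_INR, mult_INR. simpl (INR 2). simpl (INR 1).
    pose proof (pos_INR n). field. lra.
Qed.

Lemma even_poly_derive (d : nat -> R) K x :
  is_derive (fun y => sum_f_R0 (fun n => central n * d n * y ^ (2 * n)) (S K)) x
    (sum_f_R0 (fun m => central m * ((2 * INR m + 1) * d (S m)) * x ^ (2 * m + 1)) K).
Proof.
  replace (sum_f_R0 _ K)
    with (sum_f_R0 (fun n => central n * d n * (INR (2 * n) * x ^ pred (2 * n))) (S K)).
  - apply (is_derive_poly (fun n => central n * d n) (fun n => 2 * n)%nat); reflexivity.
  - rewrite decomp_sum by lia. simpl (INR (2 * 0)). rewrite Rmult_0_l, Rmult_0_r, Rplus_0_l.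
    apply sum_eq. intros m _. replace (pred (2 * S m)) with (2 * m + 1)%nat by lia.
    rewrite central_S, mult_INR, (S_INR m). simpl (INR 2). pose proof (pos_INR m). field. lra.
Qed.

Lemma sqrt_partial_derive K x : is_derive (sqrt_partial (S K)) x (x * binom_partial K (x ^ 2)).
Proof.
  unfold sqrt_partial, binom_partial. rewrite scal_sum.
  replace (sum_f_R0 _ K) with (sum_f_R0 (fun m =>
    central m * ((2 * INR m + 1) * / (2 * INR (S m) - 1)) * x ^ (2 * m + 1)) K).
  - apply (even_poly_derive (fun n => / (2 * INR n - 1))).
  - apply sum_eq. intros m _. rewrite S_INR, pow_add, <- pow_mult. pose proof (pos_INR m). field. lra.
Qed.

Lemma asin_int_partial_derive K x : is_derive (asin_int_partial (S K)) x (asin_partial K x).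
Proof.
  unfold asin_int_partial, asin_partial.
  replace (sum_f_R0 _ K) with (sum_f_R0 (fun m =>
    central m * ((2 * INR m + 1) * / (2 * INR (S m) - 1) ^ 2) * x ^ (2 * m + 1)) K).
  - apply (even_poly_derive (fun n => / (2 * INR n - 1) ^ 2)).
  - apply sum_eq. intros m _. rewrite S_INR. pose proof (pos_INR m). field. lra.
Qed.

Lemma even_poly_0 (c : nat -> R) K : sum_f_R0 (fun n => c n * 0 ^ (2 * n)) K = c 0%nat.
Proof.
  induction K as [|K IH]; [simpl; ring |].
  rewrite tech5, IH, pow_i by lia. ring.
Qed.

Lemma asin_partial_0 K : asin_partial K 0 = 0.
Proof.
  unfold asin_partial. induction K as [|K IH]; [simpl; field |].
  rewrite tech5, IH, pow_i by lia. unfold Rdiv. ring.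
Qed.

Lemma asin_partial_error K x : 0 <= x < 1 -> 0 <= asin x - asin_partial K x <= geom_tail K x.
Proof.
  intros Hx. apply (derive_bounds_from_0 (fun t => asin t - asin_partial K t)
    (fun t => 1 / sqrt (1 - t ^ 2) - binom_partial K (t ^ 2))); [lra | | |].
  - rewrite asin_0, asin_partial_0. ring.
  - intros t Ht. apply (is_derive_minus asin (asin_partial K)).
    + apply is_derive_asin. lra.
    + apply asin_partial_derive.
  - intros t Ht. apply binom_partial_sq_error; lra.
Qed.

Lemma sqrt_partial_error K x : 0 <= x < 1 ->
  0 <= - sqrt (1 - x ^ 2) - sqrt_partial (S K) x <= geom_tail K x.
Proof.
  intros Hx. apply (derive_bounds_from_0 (fun t => - sqrt (1 - t ^ 2) - sqrt_partial (S K) t)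
    (fun t => t * (1 / sqrt (1 - t ^ 2) - binom_partial K (t ^ 2)))); [lra | | |].
  - unfold sqrt_partial. rewrite even_poly_0, central_0.
    replace (1 - 0 ^ 2) with 1 by ring. rewrite sqrt_1. simpl. field.
  - intros t Ht. assert (0 < sqrt (1 - t ^ 2)) by (apply sqrt_lt_R0; nra).
    replace (t * _) with (- (- t / sqrt (1 - t ^ 2)) - t * binom_partial K (t ^ 2)) by (field; lra).
    apply is_derive_minus_R; [| apply sqrt_partial_derive].
    apply (is_derive_opp (fun t => sqrt (1 - t ^ 2))), is_derive_sqrt_1_sub_sq. lra.
  - intros t Ht. pose proof (binom_partial_sq_error K t x Ht ltac:(lra)).
    split; [apply Rmult_le_pos |]; nra.
Qed.

Lemma asin_int_partial_0 K : asin_int_partial K 0 = 1.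
Proof. unfold asin_int_partial. rewrite even_poly_0, central_0. simpl. field. Qed.

Lemma asin_int_partial_error K x : 0 <= x < 1 ->
  0 <= sqrt (1 - x ^ 2) + x * asin x - asin_int_partial (S K) x <= geom_tail K x.
Proof.
  intros Hx. apply (derive_bounds_from_0 (fun t => sqrt (1 - t ^ 2) + t * asin t - asin_int_partial (S K) t)
    (fun t => asin t - asin_partial K t)); [lra | | |].
  - rewrite asin_int_partial_0. replace (1 - 0 ^ 2) with 1 by ring. rewrite sqrt_1. ring.
  - intros t Ht. assert (0 < sqrt (1 - t ^ 2)) by (apply sqrt_lt_R0; nra).
    replace (asin t - asin_partial K t)
      with (- t / sqrt (1 - t ^ 2) + (1 * asin t + t * (1 / sqrt (1 - t ^ 2))) - asin_partial K t)
      by (field; lra).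
    apply is_derive_minus_R; [apply is_derive_plus_R | apply asin_int_partial_derive].
    + apply is_derive_sqrt_1_sub_sq. lra.
    + apply is_derive_mult_R; [apply is_derive_Reals, derivable_pt_lim_id | apply is_derive_asin; lra].
  - intros t Ht. pose proof (asin_partial_error K t ltac:(lra)).
    pose proof (geom_tail_le K t x Ht ltac:(lra)). lra.
Qed.

(** * The generating function Phi *)

Definition Phi_coef n := INR n * central n / ((2 * INR n - 1) ^ 2 * (2 * INR n + 1)).
Definition Phi_partial K w := sum_f_R0 (fun n => Phi_coef n * w ^ (2 * n)) K.
Definition Phi w := / 8 * sqrt (1 - w ^ 2) + / 4 * w * asin w - / 8 * asin w / w.

(* Partial fractions: [n / ((2n-1)^2 (2n+1)) = 1/4 (2n-1)^-2 + 1/8 (2n-1)^-1 - 1/8 (2n+1)^-1]. *)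
Lemma Phi_partial_decomp K w : w <> 0 ->
  Phi_partial K w = / 4 * asin_int_partial K w + / 8 * sqrt_partial K w - / (8 * w) * asin_partial K w.
Proof.
  intros Hw. unfold Phi_partial, asin_int_partial, sqrt_partial, asin_partial.
  induction K as [|K IH]; [unfold Phi_coef; simpl; field; lra |].
  rewrite !tech5, IH. unfold Phi_coef. pose proof (odd_INR_neq_0 (S K)). pose proof (pos_INR (S K)).
  rewrite pow_add, pow_1. field. repeat split; auto; lra.
Qed.

Lemma Phi_partial_S_error K w : 0 < w < 1 ->
  - geom_tail K w / (8 * w) <= Phi w - Phi_partial (S K) w <= 3 / 8 * geom_tail K w.
Proof.
  intros Hw. rewrite Phi_partial_decomp by lra.
  replace (Phi w - _) with
    (/ 4 * (sqrt (1 - w ^ 2) + w * asin w - asin_int_partial (S K) w)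
     + / 8 * (- sqrt (1 - w ^ 2) - sqrt_partial (S K) w)
     - / (8 * w) * (asin w - asin_partial (S K) w)) by (unfold Phi; field; lra).
  pose proof (asin_int_partial_error K w ltac:(lra)). pose proof (sqrt_partial_error K w ltac:(lra)).
  pose proof (asin_partial_error (S K) w ltac:(lra)). pose proof (geom_tail_S K w ltac:(lra)).
  assert (0 < / (8 * w)) by (apply Rinv_0_lt_compat; lra).
  unfold Rdiv. split; nra.
Qed.

Lemma is_lim_seq_Phi_partial w : 0 < w < 1 -> is_lim_seq (fun K => Phi_partial K w) (Phi w).
Proof.
  intros Hw. apply is_lim_seq_incr_1.
  pose proof (is_lim_seq_geom_tail w ltac:(lra)) as Ht.
  apply (is_lim_seq_le_le (fun K => Phi w - 3 / 8 * geom_tail K w) _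
    (fun K => Phi w + geom_tail K w / (8 * w))).
  - intros K. pose proof (Phi_partial_S_error K w Hw). lra.
  - replace (Phi w) with (Phi w - 3 / 8 * 0) at 1 by ring.
    apply is_lim_seq_minus', is_lim_seq_mult'; auto using is_lim_seq_const.
  - replace (Phi w) with (Phi w + 0 * / (8 * w)) at 1 by ring.
    apply is_lim_seq_plus', is_lim_seq_mult'; auto using is_lim_seq_const.
Qed.

Lemma Phi_coef_nonneg n : 0 <= Phi_coef n.
Proof.
  unfold Phi_coef. pose proof (pos_INR n). pose proof (central_bounds n). pose proof (odd_INR_neq_0 n).
  apply Rdiv_le_0_compat; [nra |]. apply Rmult_lt_0_compat; [apply pow2_gt_0 |]; lra.
Qed.

Lemma Phi_coef_S_le n : Phi_coef (S n) <= / (INR n + 1) - / (INR n + 2).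
Proof.
  unfold Phi_coef. rewrite S_INR. pose proof (pos_INR n). pose proof (central_bounds (S n)).
  replace (/ (INR n + 1) - / (INR n + 2)) with (1 / ((INR n + 1) * (INR n + 2))) by (field; lra).
  replace (2 * (INR n + 1) - 1) with (2 * INR n + 1) by ring.
  replace (2 * (INR n + 1) + 1) with (2 * INR n + 3) by ring.
  set (D := (2 * INR n + 1) ^ 2 * (2 * INR n + 3)). set (E := (INR n + 1) * (INR n + 2)).
  assert (0 < D) by (unfold D; simpl; apply Rmult_lt_0_compat; nra).
  assert (0 < E) by (unfold E; nra).
  apply Rmult_le_reg_r with (D * E); [nra |].
  replace ((INR n + 1) * central (S n) / D * (D * E)) with ((INR n + 1) * E * central (S n)) by (field; lra).
  replace (1 / E * (D * E)) with D by (field; lra).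
  assert ((INR n + 1) * E <= D) by (unfold D, E; simpl; nra).
  assert (0 <= (INR n + 1) * E) by nra. nra.
Qed.

Lemma Phi_partial_incr K d w : 0 <= w <= 1 ->
  0 <= Phi_partial (d + K) w - Phi_partial K w <= / (INR K + 1) - / (INR (d + K) + 1).
Proof.
  intros Hw. induction d as [|d IH]; [simpl; lra |].
  unfold Phi_partial in *. rewrite plus_Sn_m, tech5, S_INR.
  pose proof (Phi_coef_nonneg (S (d + K))). pose proof (Phi_coef_S_le (d + K)).
  assert (0 <= w ^ (2 * S (d + K)) <= 1) by (split; [apply pow_le | apply pow_le_1]; lra).
  replace (INR (d + K) + 1 + 1) with (INR (d + K) + 2) by ring. nra.
Qed.

Lemma Phi_partial_error K w : 0 < w < 1 -> 0 <= Phi w - Phi_partial K w <= / (INR K + 1).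
Proof.
  intros Hw.
  assert (Hlim : is_lim_seq (fun d => Phi_partial (d + K) w) (Phi w))
    by (apply (is_lim_seq_incr_n (fun K => Phi_partial K w)), is_lim_seq_Phi_partial, Hw).
  assert (Hincr : forall d, 0 <= Phi_partial (d + K) w - Phi_partial K w <= / (INR K + 1)).
  { intros d. pose proof (Phi_partial_incr K d w ltac:(lra)).
    assert (0 < / (INR (d + K) + 1)) by (apply Rinv_0_lt_compat; pose proof (pos_INR (d + K)); lra). lra. }
  split.
  - enough (Rbar_le (Phi_partial K w) (Phi w)) by (simpl in *; lra).
    apply (is_lim_seq_le (fun _ => Phi_partial K w) (fun d => Phi_partial (d + K) w));
      [intros d; specialize (Hincr d); lra | apply is_lim_seq_const | exact Hlim].
  - enough (Rbar_le (Phi w) (Phi_partial K w + / (INR K + 1))) by (simpl in *; lra).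
    apply (is_lim_seq_le (fun d => Phi_partial (d + K) w) (fun _ => Phi_partial K w + / (INR K + 1)));
      [intros d; specialize (Hincr d); lra | exact Hlim | apply is_lim_seq_const].
Qed.

(** * Wallis integrals and the exchange of sum and integral *)

Definition wallis m := 4 ^ m / ((2 * INR m + 1) * Binomial.C (2 * m) m).

Lemma wallis_S m : wallis (S m) = wallis m * (2 * (INR m + 1)) / (2 * INR m + 3).
Proof.
  unfold wallis. rewrite C_central_S, S_INR. simpl (4 ^ S m).
  pose proof (C_central_pos m). pose proof (pos_INR m). field. repeat split; lra.
Qed.

Lemma is_RInt_wallis m : is_RInt (fun s => (1 - s ^ 2) ^ m) 0 1 (wallis m).
Proof.
  induction m as [|m IH].
  - unfold wallis, Binomial.C. simpl. replace (1 / ((2 * 0 + 1) * (1 / (1 * 1)))) with ((1 - 0) * 1) by field.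
    apply is_RInt_const_R.
  - (* Integration by parts: [(s (1 - s^2)^(m+1))' = (2m+3) (1 - s^2)^(m+1) - 2(m+1) (1 - s^2)^m]. *)
    assert (Hparts : is_RInt
        (fun s => (2 * INR m + 3) * (1 - s ^ 2) ^ S m - 2 * (INR m + 1) * (1 - s ^ 2) ^ m) 0 1
        (1 * (1 - 1 ^ 2) ^ S m - 0 * (1 - 0 ^ 2) ^ S m)).
    { apply (is_RInt_derive_R (fun s => s * (1 - s ^ 2) ^ S m)).
      - intros s _. auto_derive; auto.
        change (match m with 0%nat => 1 | S _ => INR m + 1 end) with (INR (S m)).
        replace (1 + - (s * (s * 1))) with (1 - s ^ 2) by ring.
        change ((1 - s ^ 2) ^ S m) with ((1 - s ^ 2) * (1 - s ^ 2) ^ m). rewrite S_INR. ring.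
      - intros s _. apply continuous_of_ex_derive. auto_derive. auto. }
    replace (1 * (1 - 1 ^ 2) ^ S m - 0 * (1 - 0 ^ 2) ^ S m) with 0 in Hparts by (simpl; ring).
    pose proof (is_RInt_scal_R _ _ _ (/ (2 * INR m + 3)) _
      (is_RInt_plus_R _ _ _ _ _ _ Hparts (is_RInt_scal_R _ _ _ (2 * (INR m + 1)) _ IH))) as H.
    pose proof (pos_INR m).
    rewrite wallis_S. replace (wallis m * (2 * (INR m + 1)) / (2 * INR m + 3))
      with (/ (2 * INR m + 3) * (0 + 2 * (INR m + 1) * wallis m)) by (field; lra).
    eapply is_RInt_ext_R; [| exact H]. intros s _. cbv beta. field. lra.
Qed.

Lemma lhs_term_eq r n : lhs_term r n = / 4 ^ r * (Phi_coef n * wallis (2 * n + r)).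
Proof.
  unfold lhs_term, Phi_coef, wallis, central.
  replace (4 * n + 2 * r)%nat with (2 * (2 * n + r))%nat by lia.
  rewrite plus_INR, !mult_INR. simpl (INR 2).
  rewrite pow_add, pow_mult. replace (4 ^ 2) with (4 * 4) by ring. rewrite Rpow_mult_distr.
  pose proof (odd_INR_neq_0 n). pose proof (pos_INR n). pose proof (pos_INR r).
  pose proof (C_central_pos n). pose proof (C_central_pos (2 * n + r)).
  assert (4 ^ n <> 0) by (apply pow_nonzero; lra). assert (4 ^ r <> 0) by (apply pow_nonzero; lra).
  field. repeat split; lra.
Qed.

Lemma is_RInt_Phi_partial r N : is_RInt (fun s => (1 - s ^ 2) ^ r * Phi_partial N (1 - s ^ 2)) 0 1
  (sum_f_R0 (fun n => Phi_coef n * wallis (2 * n + r)) N).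
Proof.
  apply (is_RInt_ext_R (fun s => sum_f_R0 (fun n => Phi_coef n * (1 - s ^ 2) ^ (2 * n + r)) N)).
  - intros s _. unfold Phi_partial. rewrite scal_sum. apply sum_eq. intros n _. rewrite pow_add. ring.
  - apply (is_RInt_sum_f_R0 (fun n s => Phi_coef n * (1 - s ^ 2) ^ (2 * n + r))).
    intros n _. apply is_RInt_scal_R, is_RInt_wallis.
Qed.

Lemma is_lim_seq_is_RInt_sandwich (f : R -> R) (g : nat -> R -> R) (I eps : nat -> R) a b l :
  a <= b -> is_RInt f a b l -> (forall N, is_RInt (g N) a b (I N)) ->
  (forall N x, a < x < b -> g N x <= f x <= g N x + eps N) ->
  is_lim_seq eps 0 -> is_lim_seq I l.
Proof.
  intros Hab Hf Hg Hfg Heps.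
  assert (Hb : forall N, l - (b - a) * eps N <= I N <= l).
  { intros N.
    pose proof (is_RInt_plus_R _ _ a b _ _ (Hg N) (is_RInt_const_R a b (eps N))) as Hge.
    assert (Hle1 : RInt f a b <= RInt (fun x => g N x + eps N) a b).
    { apply RInt_le; [auto | exists l; auto | eexists; exact Hge |]. intros x Hx. apply Hfg; auto. }
    assert (Hle2 : RInt (g N) a b <= RInt f a b).
    { apply RInt_le; [auto | exists (I N); auto | exists l; auto |]. intros x Hx. apply Hfg; auto. }
    rewrite (is_RInt_unique_R _ _ _ _ Hf), (is_RInt_unique_R _ _ _ _ (Hg N)) in *.
    rewrite (is_RInt_unique_R _ _ _ _ Hge) in Hle1. lra. }
  apply (is_lim_seq_le_le (fun N => l - (b - a) * eps N) _ (fun _ => l)); auto using is_lim_seq_const.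
  replace (Finite l) with (Finite (l - (b - a) * 0)) by (f_equal; ring).
  apply is_lim_seq_minus', is_lim_seq_mult'; auto using is_lim_seq_const.
Qed.

Lemma is_lim_seq_inv_INR_plus_2 : is_lim_seq (fun N => / (INR N + 2)) 0.
Proof.
  assert (H : is_lim_seq (fun N => INR N + 2) p_infty).
  { apply (is_lim_seq_plus _ _ p_infty 2); [apply is_lim_seq_INR | apply is_lim_seq_const | constructor]. }
  apply (is_lim_seq_inv _ _ H). discriminate.
Qed.

Lemma sum_lhs_term r N :
  sum_n (fun n => lhs_term r (S n)) N = / 4 ^ r * sum_f_R0 (fun n => Phi_coef n * wallis (2 * n + r)) (S N).
Proof.
  rewrite sum_n_Reals, (decomp_sum _ (S N)) by lia. simpl pred.
  replace (Phi_coef 0) with 0 by (unfold Phi_coef; simpl; field).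
  rewrite Rmult_0_l, Rplus_0_l, scal_sum. apply sum_eq. intros n _. rewrite lhs_term_eq. ring.
Qed.

Lemma is_series_lhs_term r (f : R -> R) l : is_RInt f 0 1 l ->
  (forall s, 0 < s < 1 -> f s = (1 - s ^ 2) ^ r * Phi (1 - s ^ 2)) ->
  is_series (fun n => lhs_term r (S n)) (/ 4 ^ r * l).
Proof.
  intros Hf Hfs. change (is_lim_seq (sum_n (fun n => lhs_term r (S n))) (/ 4 ^ r * l)).
  apply (is_lim_seq_ext (fun N => / 4 ^ r * sum_f_R0 (fun n => Phi_coef n * wallis (2 * n + r)) (S N))).
  { intros N. now rewrite sum_lhs_term. }
  apply (is_lim_seq_scal_l _ _ l).
  apply (is_lim_seq_is_RInt_sandwich f (fun N s => (1 - s ^ 2) ^ r * Phi_partial (S N) (1 - s ^ 2))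
    _ (fun N => / (INR N + 2)) 0 1);
    [lra | exact Hf | intros; apply is_RInt_Phi_partial | | exact is_lim_seq_inv_INR_plus_2].
  intros N s Hs. rewrite Hfs by exact Hs.
  assert (Hw : 0 < 1 - s ^ 2 < 1) by (split; nra).
  pose proof (Phi_partial_error (S N) _ Hw) as HE. rewrite S_INR in HE.
  replace (INR N + 1 + 1) with (INR N + 2) in HE by ring.
  assert (0 <= (1 - s ^ 2) ^ r <= 1) by (split; [apply pow_le | apply pow_le_1]; lra).
  assert (0 < / (INR N + 2)) by (apply Rinv_0_lt_compat; pose proof (pos_INR N); lra).
  set (p := (1 - s ^ 2) ^ r) in *. set (e := / (INR N + 2)) in *.
  set (h := Phi_partial (S N) (1 - s ^ 2)) in *. split; nra.
Qed.

(** * Evaluation of the integral *)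

Lemma is_RInt_varphi r :
  is_RInt (fun s => (1 - s ^ 2) ^ r * (s * sqrt (2 - s ^ 2))) 0 1 (varphi (2 * r + 1)).
Proof.
  set (f := fun v => v ^ r * sqrt (1 + v)).
  assert (Hf : forall v, 0 <= v -> continuous f v).
  { intros v Hv. apply continuous_of_ex_derive. unfold f. auto_derive. lra. }
  assert (Hsq : is_RInt (fun t => 2 * t * f (t ^ 2)) 0 1 (RInt f 0 1)).
  { replace (RInt f 0 1) with (RInt f (0 ^ 2) (1 ^ 2)) by (f_equal; ring).
    apply (is_RInt_comp_R f (fun t => t ^ 2) (fun t => 2 * t)).
    - intros x _. apply Hf, pow2_ge_0.
    - intros x _. split; [auto_derive; auto; ring | apply continuous_of_ex_derive; auto_derive; auto]. }
  assert (Hvarphi : varphi (2 * r + 1) = RInt f 0 1 / 2).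
  { apply is_RInt_unique_R. unfold Rdiv. rewrite Rmult_comm.
    eapply is_RInt_ext_R; [| apply (is_RInt_scal_R _ _ _ (/ 2) _ Hsq)].
    intros t _. unfold f. rewrite <- pow_mult, pow_add, pow_1. field. }
  assert (Hsub : is_RInt (fun s => - 2 * s * f (1 - s ^ 2)) 0 1 (RInt f 1 0)).
  { replace (RInt f 1 0) with (RInt f (1 - 0 ^ 2) (1 - 1 ^ 2)) by (f_equal; ring).
    apply (is_RInt_comp_R f (fun s => 1 - s ^ 2) (fun s => - 2 * s)).
    - intros x Hx. rewrite Rmin_left, Rmax_right in Hx by lra. apply Hf. nra.
    - intros x _. split; [auto_derive; auto; ring | apply continuous_of_ex_derive; auto_derive; auto]. }
  rewrite <- (opp_RInt_swap f) in Hsub.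
  2: { apply ex_RInt_continuous_R. intros v Hv. rewrite Rmin_left, Rmax_right in Hv by lra. apply Hf. lra. }
  rewrite Hvarphi. replace (RInt f 0 1 / 2) with (- / 2 * opp (RInt f 0 1)) by (unfold opp; simpl; field).
  eapply is_RInt_ext_R; [| apply (is_RInt_scal_R _ _ _ _ _ Hsub)].
  intros s _. unfold f. replace (1 + (1 - s ^ 2)) with (2 - s ^ 2) by ring. field.
Qed.

Lemma sqrt_2_sub_sq s : 0 <= s <= 1 -> sqrt (2 - s ^ 2) = sqrt 2 * sqrt (1 - s ^ 2 / 2).
Proof. intros Hs. rewrite <- sqrt_mult by nra. f_equal. field. Qed.

Lemma is_RInt_calB k :
  is_RInt (fun s => s ^ (2 * k + 1) / sqrt (2 - s ^ 2)) 0 1 (2 ^ k / sqrt 2 * calB k).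
Proof.
  set (f := fun t => t ^ k / sqrt (1 - t)).
  assert (H : is_RInt (fun s => s * f (s ^ 2 / 2)) 0 1 (calB k)).
  { unfold calB. replace (RInt _ 0 (1 / 2)) with (RInt f (0 ^ 2 / 2) (1 ^ 2 / 2)) by (f_equal; field).
    apply (is_RInt_comp_R f (fun s => s ^ 2 / 2) (fun s => s)).
    - intros x Hx. rewrite Rmin_left, Rmax_right in Hx by lra.
      apply continuous_of_ex_derive. unfold f. auto_derive.
      split; [nra |]. split; [apply Rgt_not_eq, sqrt_lt_R0; nra | auto].
    - intros x _. split; [auto_derive; auto; field | apply continuous_of_ex_derive; auto_derive; auto]. }
  eapply is_RInt_ext_R; [| apply (is_RInt_scal_R _ _ _ (2 ^ k / sqrt 2) _ H)].
  intros x Hx. rewrite Rmin_left, Rmax_right in Hx by lra. unfold f. rewrite sqrt_2_sub_sq by lra.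
  assert (0 < sqrt (1 - x ^ 2 / 2)) by (apply sqrt_lt_R0; nra). pose proof Rlt_sqrt2_0.
  unfold Rdiv. rewrite Rpow_mult_distr, pow_inv, <- pow_mult, pow_add, pow_1.
  field. repeat split; try lra. apply pow_nonzero; lra.
Qed.

Definition wallis_prim m s :=
  sum_f_R0 (fun k => Binomial.C m k * (-1) ^ k * s ^ (2 * k + 1) / (2 * INR k + 1)) m.

Lemma wallis_prim_derive m s : is_derive (wallis_prim m) s ((1 - s ^ 2) ^ m).
Proof.
  replace ((1 - s ^ 2) ^ m) with (sum_f_R0 (fun k => Binomial.C m k * (-1) ^ k * s ^ (2 * k)) m).
  - apply (is_derive_poly (fun k => Binomial.C m k * (-1) ^ k / (2 * INR k + 1)) (fun k => 2 * k + 1)%nat).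
    + intros y. apply sum_eq. intros k _. unfold Rdiv. ring.
    + intros k _. replace (pred (2 * k + 1)) with (2 * k)%nat by lia.
      rewrite plus_INR, mult_INR. simpl (INR 2). simpl (INR 1). pose proof (pos_INR k). field. lra.
  - replace (1 - s ^ 2) with (- s ^ 2 + 1) by ring. rewrite binomial.
    apply sum_eq. intros k _. rewrite pow1, pow_mult. replace (- s ^ 2) with (-1 * s ^ 2) by ring.
    rewrite Rpow_mult_distr. ring.
Qed.

Lemma wallis_prim_0 m : wallis_prim m 0 = 0.
Proof.
  unfold wallis_prim. rewrite (sum_eq _ (fun _ => 0)); [rewrite sum_cte; ring |].
  intros k _. rewrite pow_i by lia. unfold Rdiv. ring.
Qed.

Definition calB_comb m :=
  sum_f_R0 (fun k => Binomial.C m k * (-1) ^ k / (2 * INR k + 1) * (2 ^ k / sqrt 2 * calB k)) m.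

Lemma is_RInt_wallis_prim m :
  is_RInt (fun s => wallis_prim m s / sqrt (2 - s ^ 2)) 0 1 (calB_comb m).
Proof.
  eapply is_RInt_ext_R; [| apply (is_RInt_sum_f_R0
    (fun k s => Binomial.C m k * (-1) ^ k / (2 * INR k + 1) * (s ^ (2 * k + 1) / sqrt (2 - s ^ 2))))].
  - intros x _. unfold wallis_prim, Rdiv. rewrite (Rmult_comm _ (/ sqrt (2 - x ^ 2))), scal_sum.
    apply sum_eq. intros k _. ring.
  - intros k _. apply is_RInt_scal_R, is_RInt_calB.
Qed.

(* [asin (1 - s^2)] written so as to stay differentiable at [s = 0]. *)
Definition theta s := PI / 2 - 2 * asin (s / sqrt 2).

Lemma asin_1_sub_sq s : 0 <= s <= 1 -> asin (1 - s ^ 2) = theta s.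
Proof.
  intros Hs. unfold theta. pose proof Rlt_sqrt2_0.
  assert (Hu : 0 <= s / sqrt 2 <= 1).
  { split; [apply Rdiv_le_0_compat; lra |]. apply Rle_div_l; [lra |].
    assert (1 <= sqrt 2) by (rewrite <- sqrt_1; apply sqrt_le_1; lra). lra. }
  set (al := asin (s / sqrt 2)).
  assert (Hsin : sin al = s / sqrt 2) by (apply sin_asin; lra).
  pose proof (asin_bound (s / sqrt 2)) as Hb. fold al in Hb.
  assert (Hal : 0 <= al).
  { destruct (Rle_or_lt 0 al) as [| Hlt]; auto.
    assert (sin al < 0) by (apply sin_lt_0_var; pose proof PI_RGT_0; lra). lra. }
  replace (1 - s ^ 2) with (sin (PI / 2 - 2 * al)); [apply asin_sin; lra |].
  rewrite sin_shift, cos_2a_sin, Hsin. field_simplify; [| lra].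
  replace (sqrt 2 ^ 2) with 2 by (simpl; rewrite Rmult_1_r, sqrt_sqrt; lra). field.
Qed.

Lemma theta_1 : theta 1 = 0.
Proof. rewrite <- asin_1_sub_sq by lra. replace (1 - 1 ^ 2) with 0 by ring. apply asin_0. Qed.

Lemma theta_derive s : 0 <= s <= 1 -> is_derive theta s (- 2 / sqrt (2 - s ^ 2)).
Proof.
  intros Hs. pose proof Rlt_sqrt2_0.
  assert (Hu : 0 <= s / sqrt 2 < 1).
  { split; [apply Rdiv_le_0_compat; lra |]. apply Rlt_div_l; [lra |].
    assert (1 < sqrt 2) by (rewrite <- sqrt_1; apply sqrt_lt_1; lra). lra. }
  assert (Hasin : is_derive (fun s => asin (s / sqrt 2)) s (/ sqrt 2 * (1 / sqrt (1 - (s / sqrt 2) ^ 2)))).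
  { apply (is_derive_comp asin (fun s => s / sqrt 2)); [apply is_derive_asin; lra |].
    auto_derive; [lra | field; lra]. }
  replace (- 2 / sqrt (2 - s ^ 2)) with (0 - 2 * (/ sqrt 2 * (1 / sqrt (1 - (s / sqrt 2) ^ 2)))).
  - apply is_derive_minus_R; [auto_derive; auto | apply is_derive_scal, Hasin].
  - replace ((s / sqrt 2) ^ 2) with (s ^ 2 / 2)
      by (unfold Rdiv; rewrite Rpow_mult_distr, pow_inv, pow2_sqrt; lra).
    rewrite sqrt_2_sub_sq by lra.
    assert (0 < sqrt (1 - s ^ 2 / 2)) by (apply sqrt_lt_R0; nra). field. lra.
Qed.

Definition theta_weight r s := / 4 * (1 - s ^ 2) ^ (r + 1) - / 8 * (1 - s ^ 2) ^ (r - 1).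
Definition theta_weight_prim r s := / 4 * wallis_prim (r + 1) s - / 8 * wallis_prim (r - 1) s.

Lemma theta_weight_prim_derive r s : is_derive (theta_weight_prim r) s (theta_weight r s).
Proof.
  apply (is_derive_minus_R (fun s => / 4 * wallis_prim (r + 1) s) (fun s => / 8 * wallis_prim (r - 1) s));
    apply is_derive_scal, wallis_prim_derive.
Qed.

Lemma is_RInt_theta_weight r : is_RInt (fun s => theta_weight r s * theta s) 0 1
  (2 * (/ 4 * calB_comb (r + 1) - / 8 * calB_comb (r - 1))).
Proof.
  assert (Hparts : is_RInt
      (fun s => theta_weight r s * theta s + theta_weight_prim r s * (- 2 / sqrt (2 - s ^ 2))) 0 1
      (theta_weight_prim r 1 * theta 1 - theta_weight_prim r 0 * theta 0)).
  { apply (is_RInt_derive_R (fun s => theta_weight_prim r s * theta s)); intros x Hx;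
      rewrite Rmin_left, Rmax_right in Hx by lra.
    - apply is_derive_mult_R; [apply theta_weight_prim_derive | apply theta_derive; auto].
    - apply continuous_of_ex_derive. eexists.
      apply is_derive_plus_R; apply is_derive_mult_R.
      + unfold theta_weight. auto_derive; auto.
      + apply theta_derive; auto.
      + apply theta_weight_prim_derive.
      + auto_derive; [| reflexivity]. repeat split; [nra | apply Rgt_not_eq, sqrt_lt_R0; nra]. }
  replace (theta_weight_prim r 1 * theta 1 - theta_weight_prim r 0 * theta 0) with 0 in Hparts
    by (unfold theta_weight_prim; rewrite theta_1, !wallis_prim_0; ring).
  assert (Hprim : is_RInt (fun s => 2 * theta_weight_prim r s / sqrt (2 - s ^ 2)) 0 1
      (2 * (/ 4 * calB_comb (r + 1) - / 8 * calB_comb (r - 1)))).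
  { eapply is_RInt_ext_R; [| apply is_RInt_scal_R, is_RInt_minus_R; apply is_RInt_scal_R, is_RInt_wallis_prim].
    intros x _. unfold theta_weight_prim, Rdiv. ring. }
  replace (2 * _) with (0 + 2 * (/ 4 * calB_comb (r + 1) - / 8 * calB_comb (r - 1))) by ring.
  eapply is_RInt_ext_R; [| apply (is_RInt_plus_R _ _ _ _ _ _ Hparts Hprim)].
  intros x _. unfold Rdiv. ring.
Qed.

Definition Psi r s := / 8 * ((1 - s ^ 2) ^ r * (s * sqrt (2 - s ^ 2))) + theta_weight r s * theta s.

Lemma is_RInt_Psi r : is_RInt (Psi r) 0 1
  (/ 8 * varphi (2 * r + 1) + 2 * (/ 4 * calB_comb (r + 1) - / 8 * calB_comb (r - 1))).
Proof. apply is_RInt_plus_R; [apply is_RInt_scal_R, is_RInt_varphi | apply is_RInt_theta_weight]. Qed.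

Lemma Psi_eq r s : (1 <= r)%nat -> 0 < s < 1 -> Psi r s = (1 - s ^ 2) ^ r * Phi (1 - s ^ 2).
Proof.
  intros Hr Hs. destruct r as [|r]; [lia |].
  unfold Psi, theta_weight, Phi. rewrite asin_1_sub_sq by lra.
  replace (S r - 1)%nat with r by lia. replace (S r + 1)%nat with (S (S r)) by lia.
  replace (1 - (1 - s ^ 2) ^ 2) with (s ^ 2 * (2 - s ^ 2)) by ring.
  rewrite sqrt_mult, sqrt_pow2 by nra.
  assert (0 < 1 - s ^ 2) by nra.
  set (w := 1 - s ^ 2) in *. change (w ^ S (S r)) with (w * (w * w ^ r)).
  change (w ^ S r) with (w * w ^ r). field. lra.
Qed.

Lemma Rpower_2_3_2 : Rpower 2 (3 / 2) = 2 * sqrt 2.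
Proof.
  replace (3 / 2) with (1 + / 2) by field.
  rewrite Rpower_plus, Rpower_1, Rpower_sqrt by lra. reflexivity.
Qed.

Lemma sum_calB_eq r m : (m <= 2 * r)%nat ->
  sum_f_R0 (fun k => (-1) ^ k / ((2 * INR k + 1) * 2 ^ (2 * r - k + 1)) * Binomial.C m k * calB k) m
  = sqrt 2 / 2 ^ (2 * r + 1) * calB_comb m.
Proof.
  intros Hm. unfold calB_comb. rewrite scal_sum. apply sum_eq. intros k Hk.
  assert (E : 2 ^ (2 * r + 1) = 2 ^ (2 * r - k + 1) * 2 ^ k) by (rewrite <- pow_add; f_equal; lia).
  rewrite E. pose proof Rlt_sqrt2_0. pose proof (pos_INR k).
  assert (Hsq : sqrt 2 * sqrt 2 = 2) by (apply sqrt_sqrt; lra).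
  assert (2 ^ k <> 0) by (apply pow_nonzero; lra).
  assert (2 ^ (2 * r - k + 1) <> 0) by (apply pow_nonzero; lra).
  field. repeat split; lra.
Qed.

Lemma closed_form_eq r : (1 <= r)%nat ->
  sqrt 2 / 2 *
    sum_f_R0 (fun k => (-1) ^ k / ((2 * INR k + 1) * 2 ^ (2 * r - k + 1))
                       * Binomial.C (r + 1) k * calB k) (r + 1)
  + varphi (2 * r + 1) / 2 ^ (2 * r + 3)
  - 1 / Rpower 2 (3 / 2) *
    sum_f_R0 (fun k => (-1) ^ k / ((2 * INR k + 1) * 2 ^ (2 * r - k + 1))
                       * Binomial.C (r - 1) k * calB k) (r - 1)
  = / 4 ^ r * (/ 8 * varphi (2 * r + 1) + 2 * (/ 4 * calB_comb (r + 1) - / 8 * calB_comb (r - 1))).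
Proof.
  intros Hr. rewrite !sum_calB_eq, Rpower_2_3_2 by lia.
  replace (4 ^ r) with (2 ^ (2 * r)) by (rewrite pow_mult; f_equal; ring).
  rewrite !pow_add. pose proof Rlt_sqrt2_0.
  assert (Hsq : sqrt 2 * sqrt 2 = 2) by (apply sqrt_sqrt; lra).
  assert (2 ^ (2 * r) <> 0) by (apply pow_nonzero; lra).
  field_simplify; [| repeat split; lra | repeat split; lra].
  replace (sqrt 2 ^ 2) with 2 by (simpl; lra). field. lra.
Qed.

Theorem theorem3p0p5 (r : nat) (hr : (1 <= r)%nat) :
  is_series (fun n : nat => lhs_term r (S n))
    (sqrt 2 / 2 *
       sum_f_R0 (fun k => (-1) ^ k / ((2 * INR k + 1) * 2 ^ (2 * r - k + 1))
                          * Binomial.C (r + 1) k * calB k) (r + 1)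
     + varphi (2 * r + 1) / 2 ^ (2 * r + 3)
     - 1 / Rpower 2 (3 / 2) *
       sum_f_R0 (fun k => (-1) ^ k / ((2 * INR k + 1) * 2 ^ (2 * r - k + 1))
                          * Binomial.C (r - 1) k * calB k) (r - 1)).
Proof.
  rewrite closed_form_eq by exact hr.
  apply (is_series_lhs_term r (Psi r)).
  - apply is_RInt_Psi.
  - intros s Hs. now apply Psi_eq.
Qed.
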